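(* Let $S$ be a finite set, $N\ge1$, $\mathcal X=S^N$, $\mu$ uniform on $\mathcal X$, and let $P$ be a coordinate-replacement kernel $Pf(x)=\frac1N\sum_{i=1}^N\sum_{u\in S}K_i(x_{-i};x_i,u)f(x^{i,u})$, reversible with respect to $\mu$, with a $P$-invariant set $\Omega\subseteq\mathcal X$, $\mu(\Omega)>0$. Let $G\subseteq\Omega$. Suppose there is $\gamma>0$ such that for every coordinate $i$ and every $x_{-i}$ whose $i$-fibre $\{x^{i,u}:u\in S\}$ intersects $G$, the fibre kernel $K_i(x_{-i})$ has spectral gap at least $\gamma$ with respect to the uniform measure on $S$. Then every nonnegative $F:\mathcal X\to\mathbb R$ with $\operatorname{supp}(F)\subseteq G$ satisfies \[ \operatorname{Ent}_\mu(F^2)\le C\frac{N\log|S|}{\gamma}\,\mathcal E_P^\mu(F,F), \] where $C<\infty$ is universal.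
   Context: For $x\in S^N$, $x^{i,u}$ is $x$ with coordinate $i$ replaced by $u$, and $x_{-i}=(x_1,\dots,x_{i-1},x_{i+1},\dots,x_N)$. In a coordinate-replacement kernel each $K_i(x_{-i})$ is a Markov kernel on $S$ reversible w.r.t. the uniform measure on $S$. $\Omega$ invariant means $P(x,y)=0$ for $x\in\Omega,y\notin\Omega$. $\operatorname{Ent}_\rho(f^2)=\rho(f^2\log f^2)-\rho(f^2)\log\rho(f^2)$; $\mathcal E^\rho_K(f,f)=\frac12\sum_{x,y}\rho(x)K(x,y)(f(x)-f(y))^2$. The spectral gap of a reversible kernel $K$ with stationary law $\rho$ is $1/C_P$, where $C_P$ is the smallest constant with $\operatorname{Var}_\rho(f)\le C_P\,\mathcal E^\rho_K(f,f)$ for all real $f$. *)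

From mathcomp Require Import all_boot all_order all_algebra.
From mathcomp Require Import all_classical all_reals all_analysis.
Set Implicit Arguments. Unset Strict Implicit. Unset Printing Implicit Defensive.
Import Order.TTheory GRing.Theory Num.Theory.
Local Open Scope ring_scope.

Section Defs.
Variable R : realType.

Definition config (S : finType) (N : nat) := {ffun 'I_N -> S}.

Definition repl (S : finType) (N : nat) (x : config S N) (i : 'I_N) (u : S)
  : config S N := [ffun j => if j == i then u else x j].

Definition unif (T : finType) (x : T) : R := (#|T|%:R)^-1.

Definition expect (T : finType) (rho : T -> R) (f : T -> R) : R :=
  \sum_(x : T) rho x * f x.

Definition variance (T : finType) (rho : T -> R) (f : T -> R) : R :=
  expect rho (fun x => (f x - expect rho f) ^+ 2).

Definition xlogx (t : R) : R := if t == 0 then 0 else t * ln t.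

Definition entropy (T : finType) (rho : T -> R) (g : T -> R) : R :=
  expect rho (fun x => xlogx (g x)) - xlogx (expect rho g).

Definition dirichlet (T : finType) (rho : T -> R) (K : T -> T -> R)
  (f : T -> R) : R :=
  2^-1 * \sum_(x : T) \sum_(y : T) rho x * K x y * (f x - f y) ^+ 2.

Definition markov_kernel (T : finType) (K : T -> T -> R) : Prop :=
  (forall x y, 0 <= K x y) /\ (forall x, \sum_(y : T) K x y = 1).

Definition reversible (T : finType) (rho : T -> R) (K : T -> T -> R) : Prop :=
  forall x y, rho x * K x y = rho y * K y x.

Definition poincare_const (T : finType) (rho : T -> R) (K : T -> T -> R)
  (C : R) : Prop :=
  forall f : T -> R, variance rho f <= C * dirichlet rho K f.

(* spectral gap = 1/C_P >= gamma (gamma > 0), i.e. C_P <= 1/gamma, i.e. 1/gamma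
   is an admissible Poincare constant (C_P being the smallest admissible one). *)
Definition spectral_gap_ge (T : finType) (rho : T -> R) (K : T -> T -> R)
  (gamma : R) : Prop := poincare_const rho K gamma^-1.

Definition coord_kernel (S : finType) (N : nat)
  (K : 'I_N -> config S N -> S -> S -> R) (x y : config S N) : R :=
  (N%:R)^-1 * \sum_(i < N) \sum_(u : S) K i x (x i) u * (y == repl x i u)%:R.

Definition depends_on_rest (S : finType) (N : nat)
  (K : 'I_N -> config S N -> S -> S -> R) : Prop :=
  forall i x w, K i (repl x i w) = K i x.

Definition invariant_set (T : finType) (P : T -> T -> R) (Om : {set T}) : Prop :=
  forall x y, x \in Om -> y \notin Om -> P x y = 0.

End Defs.

(* For f >= 0 on a finite set S with uniform measure, Ent(f^2) <= 18 ln|S| Var(f):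
   compare the entropy with the Bregman divergence of t ln t between f^2 and the
   square of the mean of f.  On S^N, averaging out the coordinates one at a time
   telescopes Ent(F^2) into fibre entropies of the partially averaged densities
   h; by Minkowski's inequality the fibre variance of sqrt h can only decrease
   when h is averaged over another coordinate, so the fibre inequality
   tensorizes to Ent(F^2) <= 18 ln|S| sum_i E[Var_i F].  On fibres meeting G the
   spectral gap bounds Var_i F by gamma^-1 times the fibre Dirichlet form, on the
   others F vanishes, and the fibre Dirichlet forms average to N E_P(F,F). *)

From Pilot Require Import Defs.
From mathcomp Require Import all_boot all_order all_algebra.
From mathcomp Require Import all_classical all_reals all_analysis.
From mathcomp Require Import ring lra.
Set Implicit Arguments. Unset Strict Implicit. Unset Printing Implicit Defensive.
Import Order.TTheory GRing.Theory Num.Theory.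
Local Open Scope ring_scope.

Section RealInequalities.
Variable R : realType.
Implicit Types x a m n t : R.

Lemma ln_le_subr1 x : 0 < x -> ln x <= x - 1.
Proof.
by move=> x0; have := @le_ln1Dx R (x - 1); rewrite addrCA subrr addr0; apply; lra.
Qed.

Lemma xlogx_ge_tangent m t : 0 <= m -> 0 < t -> m * ln t + m - t <= xlogx m.
Proof.
move=> m0 t0; rewrite /xlogx; have [->|m_neq0] := eqVneq m 0; first by lra.
have mp : 0 < m by rewrite lt_neqAle eq_sym m_neq0.
have := ler_wpM2l (ltW mp) (ln_le_subr1 (divr_gt0 t0 mp)).
rewrite ln_div ?posrE // mulrBr mulrBr mulrCA divff ?gt_eqF // mulr1 mulr1; lra.
Qed.

(* The left-hand sides below are the Bregman divergence of t ln t between x^2 and a^2. *)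
Lemma bregman_xlogx_sqr_le_cubic x a : 0 <= x -> 0 < a ->
  a * (xlogx (x ^+ 2) - x ^+ 2 * ln (a ^+ 2) - x ^+ 2 + a ^+ 2)
    <= (x - a) ^+ 2 * (2 * x + a).
Proof.
move=> x0 a0; rewrite /xlogx; have [->|x_neq0] := eqVneq x 0.
  by rewrite expr0n eqxx mul0r !subr0 sub0r sqrrN mulr0 !add0r mulrC.
have xp : 0 < x by rewrite lt_neqAle eq_sym x_neq0.
rewrite sqrf_eq0 (negbTE x_neq0) !lnXn //.
have := ler_wpM2l (ltW a0) (ln_le_subr1 (divr_gt0 xp a0)).
rewrite ln_div ?posrE // [X in _ <= X]mulrBr [a * (x / a)]mulrC divfK ?gt_eqF //.
rewrite mulr1 => hln.
have := ler_wpM2l (mulr_ge0 (ler0n R 2) (sqr_ge0 x)) hln.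
rewrite !mulr2n; nra.
Qed.

Lemma bregman_xlogx_sqr_le x a n : 1 <= n -> 0 <= x -> 0 < a -> x <= n * a ->
  xlogx (x ^+ 2) - x ^+ 2 * ln (a ^+ 2) - x ^+ 2 + a ^+ 2
    <= (5 + 8 * ln n) * (x - a) ^+ 2.
Proof.
move=> n1 x0 a0 xna; have lnn : 0 <= ln n by exact: ln_ge0.
have [x_le2a|x_gt2a] := leP x (2 * a).
  rewrite -(ler_pM2l a0); apply: (le_trans (bregman_xlogx_sqr_le_cubic x0 a0)).
  have sq0 := sqr_ge0 (x - a).
  have : (x - a) ^+ 2 * (2 * x + a) <= (x - a) ^+ 2 * (5 * a) by apply: ler_wpM2l; lra.
  have := mulr_ge0 (mulr_ge0 (ltW a0) lnn) sq0.
  lra.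
have xp : 0 < x by lra.
have lnxa : ln x - ln a <= ln n.
  rewrite -ln_div ?posrE // ler_ln ?posrE ?ler_pdivrMr ?divr_gt0 //; lra.
rewrite /xlogx sqrf_eq0 gt_eqF // !lnXn //.
have : 2 * x ^+ 2 * (ln x - ln a) <= 2 * x ^+ 2 * ln n.
  by apply: ler_wpM2l => //; nra.
have : x ^+ 2 * ln n <= 4 * (x - a) ^+ 2 * ln n by apply: ler_wpM2r => //; nra.
have := sqr_ge0 (x - a).
rewrite !mulr2n; nra.
Qed.

End RealInequalities.

Section Average.
Variable R : realType.

Definition avg (T : finType) (f : T -> R) : R := #|T|%:R^-1 * \sum_x f x.

Lemma eq_avg (T : finType) (f g : T -> R) : f =1 g -> avg f = avg g.
Proof. by move=> fg; rewrite /avg (eq_bigr _ (fun x _ => fg x)). Qed.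

Lemma expect_unif (T : finType) (f : T -> R) : expect (@unif R T) f = avg f.
Proof. by rewrite /expect /unif /avg mulr_sumr. Qed.

Lemma avgD (T : finType) (f g : T -> R) : avg (fun x => f x + g x) = avg f + avg g.
Proof. by rewrite /avg big_split mulrDr. Qed.

Lemma avgN (T : finType) (f : T -> R) : avg (fun x => - f x) = - avg f.
Proof. by rewrite /avg sumrN mulrN. Qed.

Lemma avgB (T : finType) (f g : T -> R) : avg (fun x => f x - g x) = avg f - avg g.
Proof. by rewrite avgD avgN. Qed.

Lemma avgZ (T : finType) (c : R) (f : T -> R) : avg (fun x => c * f x) = c * avg f.
Proof. by rewrite /avg -mulr_sumr mulrCA. Qed.

Lemma avgZr (T : finType) (c : R) (f : T -> R) : avg (fun x => f x * c) = avg f * c.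
Proof. by rewrite mulrC -avgZ; apply: eq_avg => x; rewrite mulrC. Qed.

Lemma ler_avg (T : finType) (f g : T -> R) : (forall x, f x <= g x) -> avg f <= avg g.
Proof. by move=> fg; rewrite ler_wpM2l ?invr_ge0 ?ler0n //; apply: ler_sum. Qed.

Lemma avg_ge0 (T : finType) (f : T -> R) : (forall x, 0 <= f x) -> 0 <= avg f.
Proof. by move=> f0; rewrite mulr_ge0 ?invr_ge0 ?ler0n ?sumr_ge0. Qed.

Lemma avg_swap (T1 T2 : finType) (b : T1 -> T2 -> R) :
  avg (fun s => avg (b s)) = avg (fun t => avg (b^~ t)).
Proof.
rewrite /avg !mulr_sumr; under eq_bigr do rewrite !mulr_sumr.
under [RHS]eq_bigr do rewrite !mulr_sumr.
by rewrite exchange_big; apply: eq_bigr => t _; apply: eq_bigr => s _; rewrite mulrCA.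
Qed.

Lemma sqr_avg (T : finType) (f : T -> R) :
  avg f ^+ 2 = avg (fun s => avg (fun s' => f s * f s')).
Proof. by rewrite expr2 -avgZ; apply: eq_avg => s; rewrite mulrC -avgZ. Qed.

Lemma cauchy_schwarz_avg (T : finType) (u v : T -> R) :
  avg (fun x => u x * v x)
    <= Num.sqrt (avg (fun x => u x ^+ 2)) * Num.sqrt (avg (fun x => v x ^+ 2)).
Proof.
set Au := avg (fun x => u x ^+ 2); set Av := avg (fun x => v x ^+ 2).
set M := avg (fun x => u x * v x).
have inner i : avg (fun j => (u i * v j - u j * v i) ^+ 2)
    = u i ^+ 2 * Av + v i ^+ 2 * Au - 2 * (u i * v i) * M.
  rewrite /Au /Av /M -avgZ -avgZ -avgZ -avgN -!avgD; apply: eq_avg => j /=; ring.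
have lagrange : avg (fun i => avg (fun j => (u i * v j - u j * v i) ^+ 2))
    = 2 * (Au * Av - M ^+ 2).
  rewrite (eq_avg inner) !avgD avgN !avgZr avgZ -/Au -/Av -/M; ring.
have : M ^+ 2 <= Au * Av.
  rewrite -subr_ge0 -(pmulr_rge0 _ (ltr0Sn R 1)) -lagrange.
  by apply: avg_ge0 => i; apply: avg_ge0 => j; exact: sqr_ge0.
move=> /ler_wsqrtr; rewrite sqrtr_sqr sqrtrM; first exact/le_trans/ler_norm.
by apply: avg_ge0 => x; exact: sqr_ge0.
Qed.

Lemma minkowski_avg (T1 T2 : finType) (b : T1 -> T2 -> R) :
  avg (fun t => avg (b^~ t) ^+ 2)
    <= avg (fun s => Num.sqrt (avg (fun t => b s t ^+ 2))) ^+ 2.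
Proof.
rewrite sqr_avg (eq_avg (fun t => sqr_avg _)) avg_swap.
apply: ler_avg => s; rewrite avg_swap; apply: ler_avg => s'.
exact: cauchy_schwarz_avg.
Qed.

Lemma entropy_unif (T : finType) (g : T -> R) :
  entropy (@unif R T) g = avg (fun x => xlogx (g x)) - xlogx (avg g).
Proof. by rewrite /entropy !expect_unif. Qed.

Section NonEmpty.
Variable T : finType.
Hypothesis T_gt0 : (0 < #|T|)%N.

Lemma avg_cst (c : R) : avg (fun _ : T => c) = c.
Proof.
by rewrite /avg sumr_const -[c *+ _]mulr_natl mulrA mulVf ?mul1r // pnatr_eq0 -lt0n.
Qed.

(* Plain [variance] would be MathComp-Analysis' variance of a random variable. *)
Lemma variance_unif (f : T -> R) :
  Defs.variance (@unif R T) f = avg (fun x => f x ^+ 2) - avg f ^+ 2.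
Proof.
rewrite /Defs.variance !expect_unif; set m := avg f.
have -> : avg (fun x => (f x - m) ^+ 2)
    = avg (fun x => f x ^+ 2 + (- (2 * m) * f x + m ^+ 2)).
  by apply: eq_avg => x; rewrite /=; ring.
rewrite !avgD avgZ avg_cst -/m; ring.
Qed.

Lemma variance_unif_ge0 (f : T -> R) : 0 <= Defs.variance (@unif R T) f.
Proof. by rewrite /Defs.variance expect_unif; apply: avg_ge0 => x; exact: sqr_ge0. Qed.

Lemma ler_card_avg (f : T -> R) x : (forall y, 0 <= f y) -> f x <= #|T|%:R * avg f.
Proof.
move=> f0; rewrite mulrA mulfV ?mul1r ?pnatr_eq0 -?lt0n // (bigD1 x) //= lerDl.
exact: sumr_ge0.
Qed.

Lemma variance_unif_cst (c : R) : Defs.variance (@unif R T) (fun _ => c) = 0.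
Proof. by rewrite variance_unif !avg_cst subrr. Qed.

Lemma entropy_unif_cst (c : R) : entropy (@unif R T) (fun _ => c) = 0.
Proof. by rewrite entropy_unif !avg_cst subrr. Qed.

Lemma entropy_unif_le_bregman (g : T -> R) (t : R) : (forall x, 0 <= g x) -> 0 < t ->
  entropy (@unif R T) g <= avg (fun x => xlogx (g x) - g x * ln t - g x + t).
Proof.
move=> g0 t0; rewrite entropy_unif !avgD !avgN avgZr avg_cst.
by have := xlogx_ge_tangent (avg_ge0 g0) t0; lra.
Qed.

End NonEmpty.
End Average.

Lemma entropy_sqr_le_variance (R : realType) (S : finType) (f : S -> R) :
  (0 < #|S|)%N -> (forall s, 0 <= f s) ->
  entropy (@unif R S) (fun s => f s ^+ 2)
    <= 18 * ln #|S|%:R * Defs.variance (@unif R S) f.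
Proof.
move=> S_gt0 f0; set n : R := #|S|%:R.
have n_ge1 : 1 <= n by rewrite ler1n.
have rhs_ge0 : 0 <= 18 * ln n * Defs.variance (@unif R S) f.
  by rewrite !mulr_ge0 ?ln_ge0 ?variance_unif_ge0.
have /card_gt0P [s0 _] := S_gt0.
have const_case : (forall s, f s = f s0) ->
    entropy (@unif R S) (fun s => f s ^+ 2) <= 18 * ln n * Defs.variance (@unif R S) f.
  move=> fE; have -> : (fun s => f s ^+ 2) = (fun _ => f s0 ^+ 2).
    by apply: funext => s; rewrite fE.
  by rewrite entropy_unif_cst.
have [S_le1|S_gt1] := leqP #|S| 1.
  by apply: const_case => s; move/fintype_le1P: S_le1 => /(_ s0 s) ->.
set a := avg f.
have [a0|a_neq0] := eqVneq a 0.
  apply: const_case => s; suff f_eq0 y : f y = 0 by rewrite !f_eq0.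
  by apply/eqP; rewrite eq_le f0 andbT -(mulr0 n) -a0 ler_card_avg.
have a_gt0 : 0 < a by rewrite lt_neqAle eq_sym a_neq0 avg_ge0.
have ln_n : 1 / 2 <= ln n.
  have := @ln_le_subr1 R 2^-1; rewrite lnV ?posrE // invr_gt0 ltr0n => /(_ isT) ln2.
  apply: le_trans (_ : ln 2 <= ln n); first lra.
  by rewrite ler_ln ?posrE ?(ler_nat R 2) ?ltr0n.
have f2_ge0 s : 0 <= f s ^+ 2 by exact: sqr_ge0.
apply: le_trans (entropy_unif_le_bregman S_gt0 f2_ge0 (exprn_gt0 2 a_gt0)) _.
have f_le s : f s <= n * a := ler_card_avg S_gt0 s f0.
apply: le_trans (ler_avg (fun s => bregman_xlogx_sqr_le n_ge1 (f0 s) a_gt0 (f_le s))) _.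
rewrite avgZ /Defs.variance !expect_unif -/a ler_wpM2r //; last lra.
by apply: avg_ge0 => s; exact: sqr_ge0.
Qed.

Section Fibers.
Variables (R : realType) (S : finType) (N : nat).
Local Notation T := (config S N).
Implicit Types (x : T) (i j : 'I_N) (h : T -> R).

Lemma repl_at x i s : repl x i s i = s.
Proof. by rewrite ffunE eqxx. Qed.

Lemma repl_repl x i s t : repl (repl x i s) i t = repl x i t.
Proof. by apply/ffunP => k; rewrite !ffunE; case: eqP. Qed.

Lemma repl_id x i : repl x i (x i) = x.
Proof. by apply/ffunP => k; rewrite ffunE; case: eqP => // ->. Qed.

Lemma replC x i j s t : i != j -> repl (repl x i s) j t = repl (repl x j t) i s.
Proof.
move=> ij; apply/ffunP => k; rewrite !ffunE.
case: (k =P j) => [kj|]; case: (k =P i) => // ki.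
by rewrite -ki kj eqxx in ij.
Qed.

Lemma reindex_repl i (H : T -> S -> R) :
  \sum_x \sum_s H (repl x i s) (x i) = \sum_x \sum_s H x s.
Proof.
rewrite !pair_big /=.
pose swap (p : T * S) := (repl p.1 i p.2, p.1 i).
have swapK : involutive swap by case=> x s; rewrite /swap /= repl_at repl_repl repl_id.
by rewrite [RHS](reindex_inj (inv_inj swapK)).
Qed.

Definition fiber (A : Type) (f : T -> A) i x (s : S) : A := f (repl x i s).

Definition coord_avg i h x : R := avg (fiber h i x).

Definition coords_avg (l : seq 'I_N) h : T -> R := foldr coord_avg h l.

Definition coord_invariant i h := forall x s, h (repl x i s) = h x.

Definition coord_var i (f : T -> R) x : R := Defs.variance (@unif R S) (fiber f i x).

Lemma coord_avg_invariant i h : coord_invariant i (coord_avg i h).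
Proof. by move=> x s; apply: eq_avg => t; rewrite /fiber repl_repl. Qed.

Lemma coord_avgW i j h : coord_invariant j h -> coord_invariant j (coord_avg i h).
Proof.
move=> hj; have [<-|ij] := eqVneq i j; first exact: coord_avg_invariant.
by move=> x t; apply: eq_avg => s; rewrite /fiber -replC // hj.
Qed.

Lemma coords_avg_invariant l h j : j \in l -> coord_invariant j (coords_avg l h).
Proof.
elim: l => //= i l IH; rewrite in_cons => /orP[/eqP ->|jl].
  exact: coord_avg_invariant.
exact/coord_avgW/IH.
Qed.

Lemma coord_invariant_cst h : (forall j, coord_invariant j h) -> forall x y, h x = h y.
Proof.
move=> hinv x y; pose z l := foldr (fun j z => repl z j (y j)) x l.
have zE l k : z l k = if k \in l then y k else x k.
  by elim: l => //= j l IH; rewrite ffunE in_cons IH; case: eqP => [->|].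
have -> : y = z (enum 'I_N) by apply/ffunP => k; rewrite zE mem_enum.
by rewrite /z; elim: (enum 'I_N) => //= j l ->; rewrite hinv.
Qed.

Lemma ler_coord_avg i h h' :
  (forall x, h x <= h' x) -> forall x, coord_avg i h x <= coord_avg i h' x.
Proof. by move=> hh' x; apply: ler_avg => s; exact: hh'. Qed.

Lemma coords_avg_ge0 l h : (forall x, 0 <= h x) -> forall x, 0 <= coords_avg l h x.
Proof. by elim: l => //= i l IH h0 x; apply: avg_ge0 => s; exact: IH. Qed.

Lemma coord_var_ge0 i f x : 0 <= coord_var i f x.
Proof. exact: variance_unif_ge0. Qed.

Section NonEmpty.
Hypothesis S_gt0 : (0 < #|S|)%N.

Lemma coord_var_invariant i f x : coord_invariant i f -> coord_var i f x = 0.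
Proof.
move=> fi; rewrite /coord_var /fiber.
have -> : (fun s => f (repl x i s)) = (fun _ => f x) by apply: funext => s; rewrite fi.
exact: variance_unif_cst.
Qed.

Lemma avg_coord_avg i h : avg (coord_avg i h) = avg h.
Proof.
rewrite /avg /coord_avg /avg /fiber -mulr_sumr.
have /= -> := reindex_repl i (fun y _ => h y).
under eq_bigr do rewrite sumr_const -mulr_natl.
by rewrite -mulr_sumr mulrA mulVf ?mul1r // pnatr_eq0 -lt0n.
Qed.

Lemma avg_coords_avg l h : avg (coords_avg l h) = avg h.
Proof. by elim: l => //= i l <-; exact: avg_coord_avg. Qed.

Lemma config_gt0 : (0 < #|T|)%N.
Proof. by have /card_gt0P [s _] := S_gt0; apply/card_gt0P; exists [ffun=> s]. Qed.

Lemma coords_avg_enum h x : coords_avg (enum 'I_N) h x = avg h.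
Proof.
rewrite -(avg_coords_avg (enum 'I_N)) -[LHS](avg_cst config_gt0); apply: eq_avg => y.
by apply: coord_invariant_cst => j; apply: coords_avg_invariant; rewrite mem_enum.
Qed.

Lemma coord_var_sqrt_coord_avg i j h x : (forall y, 0 <= h y) ->
  coord_var i (fun y => Num.sqrt (coord_avg j h y)) x
    <= coord_avg j (coord_var i (fun y => Num.sqrt (h y))) x.
Proof.
move=> h0; have [<-|ij] := eqVneq j i.
  rewrite coord_var_invariant; first by apply: avg_ge0 => s; exact: coord_var_ge0.
  by move=> y s; rewrite coord_avg_invariant.
pose b s t := Num.sqrt (h (repl (repl x i s) j t)).
have -> : coord_var i (fun y => Num.sqrt (coord_avg j h y)) x
    = avg (fun s => avg (fun t => b s t ^+ 2))
      - avg (fun s => Num.sqrt (avg (fun t => b s t ^+ 2))) ^+ 2.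
  have bE s : avg (fun t => b s t ^+ 2) = coord_avg j h (repl x i s).
    by apply: eq_avg => t; rewrite /b sqr_sqrtr.
  rewrite /coord_var (variance_unif S_gt0); congr (_ - _ ^+ 2); apply: eq_avg => s.
    by rewrite /fiber sqr_sqrtr -bE //; apply: avg_ge0 => t; exact: sqr_ge0.
  by rewrite /fiber bE.
have -> : coord_avg j (coord_var i (fun y => Num.sqrt (h y))) x
    = avg (fun t => avg (fun s => b s t ^+ 2)) - avg (fun t => avg (b^~ t) ^+ 2).
  rewrite /coord_avg -avgB; apply: eq_avg => t.
  rewrite /fiber /coord_var (variance_unif S_gt0) /fiber /b.
  have rC s : repl (repl x j t) i s = repl (repl x i s) j t by rewrite replC // eq_sym.
  by congr (_ - _ ^+ 2); apply: eq_avg => s; rewrite rC.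
rewrite avg_swap lerD2l lerN2; exact: minkowski_avg.
Qed.

Lemma coord_var_sqrt_coords_avg i l h x : (forall y, 0 <= h y) ->
  coord_var i (fun y => Num.sqrt (coords_avg l h y)) x
    <= coords_avg l (coord_var i (fun y => Num.sqrt (h y))) x.
Proof.
move=> h0; elim: l x => //= j l IH x.
apply: le_trans (coord_var_sqrt_coord_avg _ _ _ (coords_avg_ge0 l h0)) _.
exact: ler_coord_avg.
Qed.

Lemma avg_xlogx_coord_avg i h :
  avg (fun x => xlogx (h x)) - avg (fun x => xlogx (coord_avg i h x))
    = avg (fun x => entropy (@unif R S) (fiber h i x)).
Proof.
rewrite -(avg_coord_avg i (fun x => xlogx (h x))) -avgB.
by apply: eq_avg => x; rewrite entropy_unif.
Qed.

Section Tensorization.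
Variable c : R.
Hypothesis c_ge0 : 0 <= c.
Hypothesis entropy_fiber_le : forall f : S -> R, (forall s, 0 <= f s) ->
  entropy (@unif R S) (fun s => f s ^+ 2) <= c * Defs.variance (@unif R S) f.

Lemma avg_xlogx_coords_avg_le l h : (forall x, 0 <= h x) ->
  avg (fun x => xlogx (h x)) - avg (fun x => xlogx (coords_avg l h x))
    <= c * \sum_(i <- l) avg (coord_var i (fun x => Num.sqrt (h x))).
Proof.
move=> h0; elim: l => [|i l IH] /=; first by rewrite subrr big_nil mulr0.
set g := coords_avg l h; have g0 := coords_avg_ge0 l h0.
have step : avg (fun x => xlogx (g x)) - avg (fun x => xlogx (coord_avg i g x))
    <= c * avg (coord_var i (fun x => Num.sqrt (h x))).
  rewrite avg_xlogx_coord_avg -(avg_coords_avg l (coord_var i _)) -avgZ.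
  apply: ler_avg => x.
  apply: le_trans _ (ler_wpM2l c_ge0 (coord_var_sqrt_coords_avg i l x h0)).
  have -> : fiber g i x = (fun s => Num.sqrt (g (repl x i s)) ^+ 2).
    by apply: funext => s; rewrite sqr_sqrtr.
  exact: entropy_fiber_le.
by rewrite big_cons mulrDr; have := lerD IH step; lra.
Qed.

Theorem entropy_sqr_le_sum_coord_var (F : T -> R) : (forall x, 0 <= F x) ->
  entropy (@unif R T) (fun x => F x ^+ 2) <= c * \sum_i avg (coord_var i F).
Proof.
move=> F0; have F2_ge0 x : 0 <= F x ^+ 2 by exact: sqr_ge0.
rewrite entropy_unif -(avg_cst config_gt0 (xlogx _)).
under [X in _ - X <= _]eq_avg => x do
  rewrite -(coords_avg_enum (fun y => F y ^+ 2) x).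
apply: le_trans (avg_xlogx_coords_avg_le _ F2_ge0) _.
have -> : (fun x => Num.sqrt (F x ^+ 2)) = F.
  by apply: funext => x; rewrite sqrtr_sqr ger0_norm.
by rewrite big_enum.
Qed.

End Tensorization.
End NonEmpty.
End Fibers.

Lemma sum_indicator (R : realType) (T : finType) (r : T) (g : T -> R) :
  \sum_y (y == r)%:R * g y = g r.
Proof.
by rewrite (bigD1 r) //= eqxx mul1r big1 ?addr0 // => y /negbTE ->; rewrite mul0r.
Qed.

Section CoordinateKernel.
Variables (R : realType) (S : finType) (N : nat).
Local Notation T := (config S N).
Variables (K : 'I_N -> T -> S -> S -> R) (F : T -> R).

Lemma sum_coord_kernel x (g : T -> R) :
  \sum_y coord_kernel K x y * g y
    = N%:R^-1 * \sum_i \sum_u K i x (x i) u * g (repl x i u).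
Proof.
transitivity
  (N%:R^-1 * \sum_y \sum_i \sum_u (y == repl x i u)%:R * (K i x (x i) u * g y)).
  rewrite mulr_sumr; apply: eq_bigr => y _; rewrite -mulrA mulr_suml; congr (_ * _).
  by apply: eq_bigr => i _; rewrite mulr_suml; apply: eq_bigr => u _; ring.
congr (_ * _); rewrite exchange_big; apply: eq_bigr => i _.
by rewrite exchange_big; apply: eq_bigr => u _; exact: sum_indicator.
Qed.

Definition coord_energy i (y : T) : R :=
  2^-1 * \sum_u K i y (y i) u * (F y - F (repl y i u)) ^+ 2.

Lemma dirichlet_coord_kernel :
  dirichlet (@unif R T) (coord_kernel K) F = N%:R^-1 * \sum_i avg (coord_energy i).
Proof.
transitivity (2^-1 * \sum_x #|T|%:R^-1 * \sum_y coord_kernel K x y * (F x - F y) ^+ 2).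
  rewrite /dirichlet; apply: congr1; apply: eq_bigr => x _.
  by rewrite mulr_sumr; apply: eq_bigr => y _; rewrite -mulrA.
under eq_bigr do rewrite sum_coord_kernel.
rewrite /avg /coord_energy !mulr_sumr; under eq_bigr do rewrite !mulr_sumr.
rewrite exchange_big; apply: eq_bigr => i _; rewrite !mulr_sumr.
by apply: eq_bigr => x _; ring.
Qed.

Lemma dirichlet_fiber i x : depends_on_rest K ->
  dirichlet (@unif R S) (K i x) (fiber F i x) = coord_avg i (coord_energy i) x.
Proof.
move=> K_rest; rewrite /dirichlet /coord_avg /avg /fiber /coord_energy /unif !mulr_sumr.
apply: eq_bigr => s _; rewrite !mulr_sumr; apply: eq_bigr => u _.
by rewrite K_rest repl_at repl_repl; ring.
Qed.

Lemma coord_var_le_dirichlet (G : {set T}) gamma i x : (0 < #|S|)%N ->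
  ((exists u, repl x i u \in G) -> spectral_gap_ge (@unif R S) (K i x) gamma) ->
  (forall y, y \notin G -> F y = 0) ->
  coord_var i F x <= gamma^-1 * dirichlet (@unif R S) (K i x) (fiber F i x).
Proof.
move=> S_gt0 gap F_G.
have [/existsP[u xu]|/existsPn xG] := boolP [exists u, repl x i u \in G].
  exact: gap (ex_intro _ u xu) (fiber F i x).
rewrite /coord_var; have -> : fiber F i x = (fun _ => 0).
  by apply: funext => u; rewrite /fiber F_G.
rewrite (variance_unif_cst S_gt0) /dirichlet big1 ?mulr0 // => s _.
by rewrite big1 // => u _; rewrite subrr expr0n mulr0.
Qed.

End CoordinateKernel.

Theorem proposition2p2 (R : realType) :
  exists C : R, 0 < C /\
  forall (S : finType) (N : nat) (K : 'I_N -> config S N -> S -> S -> R)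
         (Om G : {set config S N}) (gamma : R) (F : config S N -> R),
    (1 <= N)%N ->
    depends_on_rest K ->
    (forall i x, markov_kernel (K i x)) ->
    (forall i x, reversible (@unif R S) (K i x)) ->
    reversible (@unif R _) (coord_kernel K) ->
    invariant_set (coord_kernel K) Om ->
    0 < \sum_(x in Om) @unif R _ x ->
    G \subset Om ->
    0 < gamma ->
    (forall (i : 'I_N) (x : config S N), (exists u : S, repl x i u \in G) ->
       spectral_gap_ge (@unif R S) (K i x) gamma) ->
    (forall x, 0 <= F x) ->
    (forall x, x \notin G -> F x = 0) ->
    entropy (@unif R _) (fun x => F x ^+ 2)
      <= C * (N%:R * ln (#|S|%:R) / gamma)
           * dirichlet (@unif R _) (coord_kernel K) F.
Proof.
exists 18; split => // S N K Om G gamma F N_gt0 K_rest _ _ _ _ Om_gt0 _ gamma_gt0 gap.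
move=> F_ge0 F_G.
have S_gt0 : (0 < #|S|)%N.
  have [Om0|[x _]] := set_0Vmem Om; first by rewrite Om0 big_set0 ltxx in Om_gt0.
  by apply/card_gt0P; exists (x (Ordinal N_gt0)).
have c_ge0 : 0 <= 18 * ln #|S|%:R :> R by rewrite mulr_ge0 ?ln_ge0 ?ler1n.
have fiber_bound (f : S -> R) (f_ge0 : forall s, 0 <= f s) :=
  entropy_sqr_le_variance S_gt0 f_ge0.
apply: le_trans (entropy_sqr_le_sum_coord_var S_gt0 c_ge0 fiber_bound F_ge0) _.
have -> : 18 * (N%:R * ln #|S|%:R / gamma) * dirichlet (@unif R _) (coord_kernel K) F
    = 18 * ln #|S|%:R
      * \sum_i avg (fun x => gamma^-1 * dirichlet (@unif R S) (K i x) (fiber F i x)).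
  rewrite dirichlet_coord_kernel.
  under [in RHS]eq_bigr => i _ do
    rewrite avgZ (eq_avg (fun x => dirichlet_fiber _ i x K_rest)) avg_coord_avg //.
  by rewrite -[in RHS]mulr_sumr; field; rewrite gt_eqF // pnatr_eq0 -lt0n.
rewrite ler_wpM2l // ler_sum // => i _; apply: ler_avg => x.
exact: coord_var_le_dirichlet S_gt0 (gap i x) F_G.
Qed.
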